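(* Let $\mathcal A\subseteq E^\infty$, let $V\subseteq E$ be a block subspace, $\vec v$ a finite block sequence and $T$ a $(V,\vec v)$-rule. Then there is a block subspace $X\subseteq V$ such that for every $\vec x\in T$: if there exists a block subspace $Y\subseteq X$ such that player I has a strategy in $B^T_Y(\vec x)$ to play in $\mathcal A$, then for every block subspace $Y\subseteq X$, player I has a strategy in $B^T_Y(\vec x)$ to play in $\mathcal A$.
   Context: Fix a countable field $\mathfrak F$ and let $E$ be the countable-dimensional $\mathfrak F$-vector space with basis $(e_n)$. For non-zero $x=\sum a_ne_n$, ${\rm supp}\,x=\{n:a_n\neq0\}$. A block sequence is a sequence of non-zero vectors with $\max{\rm supp}\,x_n<\min{\rm supp}\,x_{n+1}$. ''Subspace'' means an infinite-dimensional block subspace of $E$. For a subspace $X$, $X[k]=\{x\in X\setminus\{0\}:k<\min{\rm supp}\,x\}$. $E^\infty=E^{\mathbb N}$ with the product of discrete topologies; $E^{<\infty}$ is the set of finite block sequences; $\hat{}$ is concatenation; $T_{\vec x}=\{\vec y:\vec x\,\hat{}\,\vec y\in T\}$. Game $B_V(\vec v)$: if $|\vec v|$ is even: II plays a subspace $Z_0\subseteq V$; I plays non-zero $x_0\in Z_0$ and $n_0\in\mathbb N$; II plays non-zero $y_0\in V[n_0]$ and a subspace $Z_1\subseteq V$; I plays $x_1\in Z_1$, $n_1$; II plays $y_1\in V[n_1]$, $Z_2$; etc.; outcome $\vec v\,\hat{}\,(x_0,y_0,x_1,y_1,\dots)$. If $|\vec v|$ is odd: I plays $n_0$; II plays $y_0\in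 V[n_0]$ and $Z_0\subseteq V$; I plays $x_0\in Z_0$ and $n_1$; II plays $y_1\in V[n_1]$ and $Z_1$; etc.; outcome $\vec v\,\hat{}\,(y_0,x_0,y_1,x_1,\dots)$. A $(V,\vec v)$-rule is a set $T\subseteq E^{<\infty}$ with $\vec v\in T$ such that: (i) if $\vec y\in T$, $|\vec y|$ odd, then for every subspace $Z\subseteq V$ there is $z\in Z$ with $\vec y\,\hat{}\,z\in T$; (ii) if $\vec y\in T$, $|\vec y|$ even, then there is $n$ with $\vec y\,\hat{}\,z\in T$ for all $z\in V[n]$. The $T$-induced subgame $B^T_V(\vec v)$ is played as $B_V(\vec v)$ with the additional requirement that every position, i.e. the finite sequence of vectors played so far listed in the order they appear in the outcome, belongs to $T_{\vec v}$. A strategy to play in $\mathcal A$ is one all of whose outcomes lie in $\mathcal A$. *)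

From HB Require Import structures.
From mathcomp Require Import all_boot all_order all_algebra.
Set Implicit Arguments. Unset Strict Implicit. Unset Printing Implicit Defensive.
Import Order.TTheory GRing.Theory Num.Theory.
Local Open Scope ring_scope.

(* E = countable-dimensional F-vector space with basis (e_n):
   modelled as {poly F}, with e_n = 'X^n and the n-th coordinate x`_n. *)

Section Defs.
Variable F : countFieldType.
Local Notation E := {poly F}.

Definition supp_below (x y : E) : Prop :=
  forall i j, x`_i != 0 -> y`_j != 0 -> (i < j)%N.

Definition block_seq (b : nat -> E) : Prop :=
  (forall n, b n != 0) /\ (forall n, supp_below (b n) (b n.+1)).

Definition fin_block_seq (s : seq E) : Prop :=
  (forall i, (i < size s)%N -> nth 0 s i != 0) /\
  (forall i, (i.+1 < size s)%N -> supp_below (nth 0 s i) (nth 0 s i.+1)).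

Definition span_of (b : nat -> E) (x : E) : Prop :=
  exists (n : nat) (c : 'I_n -> F), x = \sum_(i < n) c i *: b i.

Definition block_subspace (Z : E -> Prop) : Prop :=
  exists b : nat -> E, block_seq b /\ (forall x, Z x <-> span_of b x).

Definition subsp (Z V : E -> Prop) : Prop := forall x, Z x -> V x.

Definition tail_sp (X : E -> Prop) (k : nat) (x : E) : Prop :=
  X x /\ x != 0 /\ (forall i, x`_i != 0 -> (k < i)%N).

Definition is_rule (V : E -> Prop) (v : seq E) (T : seq E -> Prop) : Prop :=
  (forall y, T y -> fin_block_seq y) /\ T v /\
  (forall y, T y -> odd (size y) ->
     forall Z, block_subspace Z -> subsp Z V -> exists z, Z z /\ T (rcons y z)) /\
  (forall y, T y -> ~~ odd (size y) ->
     exists n, forall z, tail_sp V n z -> T (rcons y z)).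

Definition cat_inf (v : seq E) (w : nat -> E) : nat -> E :=
  fun n => if (n < size v)%N then nth 0 v n else w (n - size v)%N.

(* moves of II after the first: a vector and a subspace *)
Definition IImove := (E * (E -> Prop))%type.

(* Strategy of I in B_Y(v), |v| even: from Z_0 and the list
   ((y_0,Z_1),...,(y_{k-1},Z_k)) it returns (x_k, n_k). *)
Definition stratI_even := (E -> Prop) -> seq IImove -> (E * nat)%type.

(* Strategy of I in B_Y(v), |v| odd: first component is n_0; second, from
   ((y_0,Z_0),...,(y_k,Z_k)) returns (x_k, n_{k+1}). *)
Definition stratI_odd := (nat * (seq IImove -> (E * nat)))%type.

(* Convention: a player who cannot move legally loses; I must always answer
   legally as long as II has played legally, and every full play in which
   II played legally has outcome in A. *)
Definition I_wins_even (Y : E -> Prop) (T : seq E -> Prop) (v : seq E)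
    (A : (nat -> E) -> Prop) (sigma : stratI_even) : Prop :=
  forall (Z : nat -> E -> Prop) (y : nat -> E),
  let m := fun k => sigma (Z 0%N) [seq (y i, Z i.+1) | i <- iota 0 k] in
  let w := fun j => if odd j then y j./2 else (m j./2).1 in
  let premise := fun K =>
     (forall i, (i <= K)%N -> block_subspace (Z i) /\ subsp (Z i) Y) /\
     (forall i, (i < K)%N -> tail_sp Y (m i).2 (y i)) /\
     (forall j, (j <= K.*2)%N -> T (v ++ mkseq w j)) in
  (forall K, premise K ->
     Z K (m K).1 /\ (m K).1 != 0 /\ T (v ++ mkseq w K.*2.+1)) /\
  ((forall K, premise K) -> A (cat_inf v w)).

Definition I_wins_odd (Y : E -> Prop) (T : seq E -> Prop) (v : seq E)
    (A : (nat -> E) -> Prop) (sigma : stratI_odd) : Prop :=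
  forall (Z : nat -> E -> Prop) (y : nat -> E),
  let m := fun k => sigma.2 [seq (y i, Z i) | i <- iota 0 k.+1] in
  let n := fun k => if k is k'.+1 then (m k').2 else sigma.1 in
  let w := fun j => if odd j then (m j./2).1 else y j./2 in
  let premise := fun K =>
     (forall i, (i <= K)%N -> block_subspace (Z i) /\ subsp (Z i) Y) /\
     (forall i, (i <= K)%N -> tail_sp Y (n i) (y i)) /\
     (forall j, (j <= K.*2.+1)%N -> T (v ++ mkseq w j)) in
  (forall K, premise K ->
     Z K (m K).1 /\ T (v ++ mkseq w K.*2.+2)) /\
  ((forall K, premise K) -> A (cat_inf v w)).

Definition I_has_strategy (Y : E -> Prop) (T : seq E -> Prop) (v : seq E)
    (A : (nat -> E) -> Prop) : Prop :=
  if odd (size v) then exists sigma, I_wins_odd Y T v A sigma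
  else exists sigma, I_wins_even Y T v A sigma.

End Defs.

(* Two facts about block subspaces drive the argument.
   - Transfer: if every vector of Y' supported beyond k lies in Y, then any
     strategy of I in B^T_Y(x) yields one in B^T_Y'(x): I answers a subspace Z
     of Y' as his Y-strategy answers the tail of Z beyond k, and raises the
     integers he plays to at least k.
   - Fusion: a decreasing sequence (W n) of block subspaces admits a block
     subspace X <= W 0, spanned by a diagonal block sequence d n in W n, whose
     vectors supported beyond the supports of d 0, ..., d (n-1) lie in W n.
   Enumerate the finite sequences x as x_0, x_1, ... and shrink V to a
   decreasing sequence W n, moving at stage n into a block subspace on which
   I has a strategy in B^T(x_n) whenever one exists below W n; let X be the
   fusion.  If some Y <= X is winning for I at x_N, a tail of Y lies in W N
   and is winning too, so W (N+1) is winning; every Y' <= X is tail-included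
   in W (N+1) and inherits I's strategy by transfer. *)

From HB Require Import structures.
From mathcomp Require Import all_boot all_order all_algebra.
From Stdlib Require Import ClassicalEpsilon FunctionalExtensionality.
Set Implicit Arguments. Unset Strict Implicit. Unset Printing Implicit Defensive.
Import Order.TTheory GRing.Theory Num.Theory.
Local Open Scope ring_scope.

Section BlockGames.
Variable F : countFieldType.
Local Notation E := {poly F}.
Implicit Types (b : nat -> E) (Z : E -> Prop).

Lemma span_natP b x :
  span_of b x <-> exists n (c : nat -> F), x = \sum_(i < n) c i *: b i.
Proof.
split; last by case=> n [c ->]; exists n, (fun i : 'I_n => c i).
case=> n [c ->]; exists n, (fun i => if insub i is Some o then c o else 0).
by apply: eq_bigr => i _; rewrite valK.
Qed.

Lemma lincomb_widen b (c : nat -> F) n p : (n <= p)%N ->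
  \sum_(i < n) c i *: b i = \sum_(i < p) (if (i < n)%N then c i else 0) *: b i.
Proof.
move=> le_np; rewrite (big_ord_widen p (fun i => c i *: b i) le_np) big_mkcond.
by apply: eq_bigr => i _; case: ifP; rewrite ?scale0r.
Qed.

Lemma span0 b : span_of b 0.
Proof. by apply/span_natP; exists 0%N, (fun _ => 0); rewrite big_ord0. Qed.

Lemma spanD b x y : span_of b x -> span_of b y -> span_of b (x + y).
Proof.
move=> /span_natP [n [c ->]] /span_natP [m [d ->]]; apply/span_natP.
exists (maxn n m), (fun i => (if (i < n)%N then c i else 0) +
                             (if (i < m)%N then d i else 0)).
rewrite (lincomb_widen b c (leq_maxl n m)) (lincomb_widen b d (leq_maxr n m)).
by rewrite -big_split; apply: eq_bigr => i _; rewrite scalerDl.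
Qed.

Lemma spanZ b a x : span_of b x -> span_of b (a *: x).
Proof.
move=> /span_natP [n [c ->]]; apply/span_natP; exists n, (fun i => a * c i).
by rewrite scaler_sumr; apply: eq_bigr => i _; rewrite scalerA.
Qed.

Lemma span_basis b j : span_of b (b j).
Proof.
apply/span_natP; exists j.+1, (fun i => if i == j then 1 else 0).
rewrite big_ord_recr /= eqxx scale1r big1 ?add0r // => i _.
by rewrite (ltn_eqF (ltn_ord i)) scale0r.
Qed.

Lemma block_subspace_lincomb Z n (c : nat -> F) (f : nat -> E) :
  block_subspace Z -> (forall i, (i < n)%N -> Z (f i)) ->
  Z (\sum_(i < n) c i *: f i).
Proof.
case=> b [_ Zb] Zf; apply/Zb/(big_ind (span_of b)) => [||i _].
- exact: span0.
- exact: spanD.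
- by apply/spanZ/Zb/Zf.
Qed.

Lemma block_subspace0 Z : block_subspace Z -> Z 0.
Proof. by case=> b [_ Zb]; apply/Zb/span0. Qed.

Lemma nonzero_coef (p : E) : p != 0 -> exists t, p`_t != 0.
Proof. by move=> p_nz; exists (size p).-1; rewrite -lead_coefE lead_coef_eq0. Qed.

Lemma coef_lt_size (p : E) t : p`_t != 0 -> (t < size p)%N.
Proof. by apply: contraR; rewrite -leqNgt => /(nth_default 0) ->. Qed.

Lemma block_seq_supp_ge b : block_seq b -> forall n t, (b n)`_t != 0 -> (n <= t)%N.
Proof.
case=> nz below; elim=> [//|n IH] t bt.
have [s bs] := nonzero_coef (nz n).
exact: leq_ltn_trans (IH s bs) (below n s t bs bt).
Qed.

Lemma block_seq_below b : block_seq b ->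
  forall i j, (i < j)%N -> supp_below (b i) (b j).
Proof.
case=> nz below i; elim=> [//|j IH]; rewrite ltnS leq_eqVlt.
case/orP=> [/eqP -> | lt_ij]; first exact: below.
move=> r t bir bjt; have [s bjs] := nonzero_coef (nz j).
exact: ltn_trans (IH lt_ij r s bir bjs) (below j s t bjs bjt).
Qed.

(* Block vectors have disjoint supports, so a coordinate in the support of b i
   only sees the i-th coefficient of a linear combination. *)
Lemma coef_block_lincomb b (c : nat -> F) p i t : block_seq b ->
  (i < p)%N -> (b i)`_t != 0 ->
  (\sum_(j < p) c j *: b j)`_t = c i * (b i)`_t.
Proof.
move=> bb lt_ip bit; rewrite coef_sum (bigD1 (Ordinal lt_ip)) //= coefZ.
rewrite big1 ?addr0 // => j ne_ji; rewrite coefZ.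
have [-> | bjt] := eqVneq (b j)`_t 0; first by rewrite mulr0.
have j_ne_i : (j : nat) <> i by move=> eq_ji; case/eqP: ne_ji; apply: val_inj.
by case: (ltngtP j i) => [lt|lt|//];
  [have := block_seq_below bb lt bjt bit | have := block_seq_below bb lt bit bjt];
  rewrite ltnn.
Qed.

Lemma span_supp_gt b k x :
  (forall n t, (b n)`_t != 0 -> (k < t)%N) -> span_of b x ->
  forall t, x`_t != 0 -> (k < t)%N.
Proof.
move=> bk /span_natP [n [c ->]] t; apply: contraR => le_tk.
rewrite coef_sum big1 // => i _; rewrite coefZ.
have [-> | bit] := eqVneq (b i)`_t 0; first by rewrite mulr0.
by have := bk i t bit; rewrite (negbTE le_tk).
Qed.

Definition basis Z : nat -> E :=
  epsilon (inhabits (fun _ => 0))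
    (fun b => block_seq b /\ forall x, Z x <-> span_of b x).

Lemma basisP Z : block_subspace Z ->
  block_seq (basis Z) /\ forall x, Z x <-> span_of (basis Z) x.
Proof. exact: epsilon_spec. Qed.

Definition tail_sub k Z : E -> Prop := span_of (fun n => basis Z (n + k.+1)).

Lemma tail_subP k Z : block_subspace Z ->
  [/\ block_subspace (tail_sub k Z), subsp (tail_sub k Z) Z &
      forall x, tail_sub k Z x -> forall t, x`_t != 0 -> (k < t)%N].
Proof.
move=> bZ; have [bb Zb] := basisP bZ; have [nz below] := bb; split.
- exists (fun n => basis Z (n + k.+1)); split; last by [].
  split=> n; [exact: nz | exact: below].
- move=> x /span_natP [n [c ->]].
  apply: (@block_subspace_lincomb Z n c (fun i => basis Z (i + k.+1)) bZ) => i _.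
  exact/Zb/span_basis.
- move=> x; apply: span_supp_gt => n t bt.
  exact: leq_trans (leq_addl n k.+1) (block_seq_supp_ge bb bt).
Qed.

Definition tail_included (Y' Y : E -> Prop) k : Prop :=
  forall x, Y' x -> (forall t, x`_t != 0 -> (k < t)%N) -> Y x.

Lemma subsp_tail_included (Y' Y : E -> Prop) k : subsp Y' Y -> tail_included Y' Y k.
Proof. by move=> sub x /sub. Qed.

Lemma tail_sp_included (Y' Y : E -> Prop) k n y :
  tail_included Y' Y k -> tail_sp Y' (maxn n k) y -> tail_sp Y n y.
Proof.
move=> inc [Y'y [y_nz y_supp]]; split; last split=> // t /y_supp.
  by apply: inc => // t /y_supp; apply: leq_ltn_trans (leq_maxr n k).
exact: leq_ltn_trans (leq_maxl n k).
Qed.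

Lemma tail_sub_included (Y' Y : E -> Prop) k Z :
  tail_included Y' Y k -> block_subspace Z -> subsp Z Y' ->
  block_subspace (tail_sub k Z) /\ subsp (tail_sub k Z) Y.
Proof.
move=> inc bZ sZY'; have [bt st supp] := tail_subP k bZ.
by split=> // x tx; apply: inc; [exact/sZY'/st | exact: supp].
Qed.

(* Transferring strategies of I along a tail inclusion Y' <= Y beyond k: I
   answers II's subspace Z by consulting his Y-strategy on the tail of Z beyond
   k, and raises every integer he plays to at least k, so that all vectors
   played live in Y. *)
Section Transfer.
Variables (A : (nat -> E) -> Prop) (T : seq E -> Prop) (v : seq E).
Variables (Y Y' : E -> Prop) (k : nat).
Hypothesis Y'_in_Y : tail_included Y' Y k.

Definition tail_move (p : IImove F) : IImove F := (p.1, tail_sub k p.2).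

Definition raise_odd (sigma : stratI_odd F) : stratI_odd F :=
  (maxn sigma.1 k,
   fun s => let r := sigma.2 (map tail_move s) in (r.1, maxn r.2 k)).

Definition raise_even (sigma : stratI_even F) : stratI_even F :=
  fun Z0 s => let r := sigma (tail_sub k Z0) (map tail_move s) in (r.1, maxn r.2 k).

(* A play against II's subspaces Z i of Y' is seen by sigma as the play against
   their tails (m0, w0, premise0); both have the same positions, and legality
   of II's moves in Y' implies their legality in Y. *)
Lemma raise_odd_wins sigma :
  I_wins_odd Y T v A sigma -> I_wins_odd Y' T v A (raise_odd sigma).
Proof.
move=> win Z y m n w premise.
have [legal outcome] := win (fun i => tail_sub k (Z i)) y.
pose m0 K := sigma.2 [seq (y i, tail_sub k (Z i)) | i <- iota 0 K.+1].
pose n0 K := if K is K'.+1 then (m0 K').2 else sigma.1.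
pose w0 j := if odd j then (m0 j./2).1 else y j./2.
pose premise0 K :=
  (forall i, (i <= K)%N ->
     block_subspace (tail_sub k (Z i)) /\ subsp (tail_sub k (Z i)) Y) /\
  (forall i, (i <= K)%N -> tail_sp Y (n0 i) (y i)) /\
  (forall j, (j <= K.*2.+1)%N -> T (v ++ mkseq w0 j)).
have m_def K : m K = ((m0 K).1, maxn (m0 K).2 k).
  by rewrite /m /m0 /= -map_comp.
have n_def K : n K = maxn (n0 K) k by case: K => [|K] //; rewrite /n m_def.
have w_def : w =1 w0 by move=> j; rewrite /w /w0 m_def.
have pos_def j : mkseq w j = mkseq w0 j by apply: eq_mkseq.
have premise_tail K : premise K -> premise0 K.
  case=> [subspaces [moves positions]]; split; [|split].
  - by move=> i /subspaces [bZ sZ]; apply: tail_sub_included Y'_in_Y bZ sZ.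
  - by move=> i /moves; rewrite n_def; apply: tail_sp_included.
  - by move=> j /positions; rewrite pos_def.
split=> [K P | all_legal].
  have [inZ pos] := legal K (premise_tail K P).
  have [bZ _] := P.1 K (leqnn K); have [_ sub _] := tail_subP k bZ.
  by rewrite m_def pos_def; split; [exact: sub|].
rewrite (_ : cat_inf v w = cat_inf v w0); last first.
  by apply: functional_extensionality => j; rewrite /cat_inf w_def.
by apply: outcome => K; apply: premise_tail.
Qed.

Lemma raise_even_wins sigma :
  I_wins_even Y T v A sigma -> I_wins_even Y' T v A (raise_even sigma).
Proof.
move=> win Z y m w premise.
have [legal outcome] := win (fun i => tail_sub k (Z i)) y.
pose m0 K := sigma (tail_sub k (Z 0%N))
               [seq (y i, tail_sub k (Z i.+1)) | i <- iota 0 K].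
pose w0 j := if odd j then y j./2 else (m0 j./2).1.
pose premise0 K :=
  (forall i, (i <= K)%N ->
     block_subspace (tail_sub k (Z i)) /\ subsp (tail_sub k (Z i)) Y) /\
  (forall i, (i < K)%N -> tail_sp Y (m0 i).2 (y i)) /\
  (forall j, (j <= K.*2)%N -> T (v ++ mkseq w0 j)).
have m_def K : m K = ((m0 K).1, maxn (m0 K).2 k).
  by rewrite /m /m0 /raise_even /= -map_comp.
have w_def : w =1 w0 by move=> j; rewrite /w /w0 m_def.
have pos_def j : mkseq w j = mkseq w0 j by apply: eq_mkseq.
have premise_tail K : premise K -> premise0 K.
  case=> [subspaces [moves positions]]; split; [|split].
  - by move=> i /subspaces [bZ sZ]; apply: tail_sub_included Y'_in_Y bZ sZ.
  - by move=> i /moves; rewrite m_def; apply: tail_sp_included.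
  - by move=> j /positions; rewrite pos_def.
split=> [K P | all_legal].
  have [inZ [nz pos]] := legal K (premise_tail K P).
  have [bZ _] := P.1 K (leqnn K); have [_ sub _] := tail_subP k bZ.
  by rewrite m_def pos_def; split; [exact: sub|].
rewrite (_ : cat_inf v w = cat_inf v w0); last first.
  by apply: functional_extensionality => j; rewrite /cat_inf w_def.
by apply: outcome => K; apply: premise_tail.
Qed.

Lemma strategy_transfer : I_has_strategy Y T v A -> I_has_strategy Y' T v A.
Proof.
rewrite /I_has_strategy; case: ifP => _ [sigma win].
  by exists (raise_odd sigma); apply: raise_odd_wins.
by exists (raise_even sigma); apply: raise_even_wins.
Qed.

End Transfer.

Section Fusion.
Variable W : nat -> E -> Prop.
Hypothesis W_block : forall n, block_subspace (W n).
Hypothesis W_decr : forall n, subsp (W n.+1) (W n).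

Lemma W_antitone i j : (i <= j)%N -> subsp (W j) (W i).
Proof.
elim: j => [|j IH]; first by rewrite leqn0 => /eqP ->.
by rewrite leq_eqVlt ltnS => /orP [/eqP -> // | /IH sub x /W_decr /sub].
Qed.

Definition pick_tail Z m : E := epsilon (inhabits 0) (tail_sp Z m).

Lemma pick_tailP Z m : block_subspace Z -> tail_sp Z m (pick_tail Z m).
Proof.
move=> bZ; apply: epsilon_spec; have [bb Zb] := basisP bZ.
exists (basis Z m.+1); split; first exact/Zb/span_basis.
split=> [|t]; first exact: bb.1.
by move=> bt; have := block_seq_supp_ge bb bt.
Qed.

Fixpoint diag n : E :=
  if n is n'.+1 then pick_tail (W n) (size (diag n')) else pick_tail (W 0) 0.

Lemma diag_tail n :
  tail_sp (W n) (if n is n'.+1 then size (diag n') else 0) (diag n).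
Proof. by case: n => [|n]; apply: pick_tailP. Qed.

Lemma diag_block : block_seq diag.
Proof.
split=> n; first by have [_ []] := diag_tail n.
move=> i j /coef_lt_size lt_i /(diag_tail n.+1).2.2; exact: ltn_trans lt_i.
Qed.

Definition fusion : E -> Prop := span_of diag.

Lemma fusion_block : block_subspace fusion.
Proof. by exists diag; split; last by []; exact: diag_block. Qed.

Lemma fusion_sub : subsp fusion (W 0).
Proof.
move=> x /span_natP [p [c ->]].
apply: (@block_subspace_lincomb (W 0) p c diag (W_block 0)) => i _.
exact: W_antitone (leq0n i) _ (diag_tail i).1.
Qed.

Lemma fusion_tail n : tail_included fusion (W n) (\sum_(i < n) size (diag i)).
Proof.
move=> x /span_natP [p [c ->]] supp_x.
have low_coef0 i : (i < n)%N -> (i < p)%N -> c i = 0.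
  move=> lt_in lt_ip; have [t dit] := nonzero_coef (diag_tail i).2.1.
  have lt_tK : (t < \sum_(i < n) size (diag i))%N.
    apply: leq_trans (coef_lt_size dit) _.
    by rewrite (bigD1 (Ordinal lt_in)) //= leq_addr.
  have : (\sum_(j < p) c j *: diag j)`_t = 0.
    by apply: contraTeq lt_tK => /supp_x lt_Kt; rewrite -leqNgt ltnW.
  by rewrite (coef_block_lincomb _ diag_block lt_ip dit) => /eqP;
    rewrite mulf_eq0 (negbTE dit) orbF => /eqP.
pose f i := if (n <= i)%N then diag i else 0.
rewrite (eq_bigr (fun i : 'I_p => c i *: f i)) => [|i _]; last first.
  by rewrite /f; case: leqP => // lt_in; rewrite low_coef0 ?scale0r.
apply: (@block_subspace_lincomb (W n) p c f (W_block n)) => i _; rewrite /f.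
case: leqP => [le_ni | _]; first exact: W_antitone le_ni _ (diag_tail i).1.
exact: block_subspace0.
Qed.

End Fusion.

Section Stabilization.
Variable Good : nat -> (E -> Prop) -> Prop.

Definition good_below n (W Y : E -> Prop) : Prop :=
  [/\ block_subspace Y, subsp Y W & Good n Y].

Definition refine n (W : E -> Prop) : E -> Prop :=
  if excluded_middle_informative (exists Y, good_below n W Y) is left _
  then epsilon (inhabits W) (good_below n W) else W.

Lemma refineP n W : block_subspace W ->
  [/\ block_subspace (refine n W), subsp (refine n W) W &
      (exists Y, good_below n W Y) -> Good n (refine n W)].
Proof.
rewrite /refine; case: excluded_middle_informative => [ex | none] bW.
  by have [] := epsilon_spec (inhabits W) _ ex.
by split=> // ex; case: (none ex).
Qed.

Fixpoint stabilize (V : E -> Prop) n : E -> Prop :=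
  if n is n'.+1 then refine n' (stabilize V n') else V.

Lemma stabilizeP V : block_subspace V ->
  [/\ forall n, block_subspace (stabilize V n),
      forall n, subsp (stabilize V n.+1) (stabilize V n) &
      forall n, (exists Y, good_below n (stabilize V n) Y) ->
        Good n (stabilize V n.+1)].
Proof.
move=> bV; have bS n : block_subspace (stabilize V n).
  by elim: n => [//|n IH]; have [] := refineP n IH.
by split=> // n; have [] := refineP n (bS n).
Qed.

End Stabilization.

End BlockGames.

(* Stage n of the stabilization handles the sequence x with pickle x = n. *)
Theorem mainTheorem5 (F : countFieldType) (A : (nat -> {poly F}) -> Prop)
    (V : {poly F} -> Prop) (v : seq {poly F}) (T : seq {poly F} -> Prop) :
  block_subspace V -> fin_block_seq v -> is_rule V v T ->
  exists X : {poly F} -> Prop,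
    block_subspace X /\ subsp X V /\
    forall x : seq {poly F}, T x ->
      (exists Y, block_subspace Y /\ subsp Y X /\ I_has_strategy Y T x A) ->
      forall Y, block_subspace Y -> subsp Y X -> I_has_strategy Y T x A.
Proof.
move=> bV _ _.
pose Good n (Y : {poly F} -> Prop) :=
  forall x, pickle x = n -> I_has_strategy Y T x A.
pose W := stabilize Good V; have [bW W_decr W_good] := stabilizeP Good bV.
exists (fusion W); split; first exact: fusion_block.
split; first exact: fusion_sub.
move=> x _ [Y [bY [YX winY]]] Y' _ Y'X; set N := pickle x.
set K := (\sum_(i < N) size (diag W i))%N.
have [bYK YK_Y YK_supp] := tail_subP K bY.
have good_tail : good_below Good N (W N) (tail_sub K Y).
  split=> [//| z Kz | x' /(pcan_inj pickleK) ->].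
    exact: (fusion_tail bW W_decr (YX z (YK_Y z Kz)) (YK_supp z Kz)).
  exact: (strategy_transfer (subsp_tail_included (k := 0) YK_Y) winY).
apply: (strategy_transfer (k := (\sum_(i < N.+1) size (diag W i))%N)).
  by move=> z /Y'X; apply: fusion_tail.
exact: W_good (ex_intro _ _ good_tail) x erefl.
Qed.
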